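(* Let $(M^3,J,\theta)$ be a pseudohermitian 3-manifold with frame $Z_1$, coframe $\theta^1$, connection form $\theta_1{}^1$ and torsion $A^1{}_{\bar1}$ as in the context, and let $\phi\in C^\infty(M)$ be complex with $|\phi|<1$. Let $F=(1-|\phi|^2)^{-1/2}$ and consider the CR structure spanned by $Z_{\bar1}^\phi=F(Z_{\bar1}+\phi Z_1)$ with the same contact form $\theta$ and admissible coframe $\theta^1_\phi=F(\theta^1-\phi\theta^{\bar1})$ (so that $d\theta=i\theta^1_\phi\wedge\theta^{\bar1}_\phi$). Then its Tanaka–Webster connection form $\theta_1{}^1{}_\phi$ and torsion $A^1{}_{\bar1}{}^\phi$ (defined by $\tau^1_\phi=A^1{}_{\bar1}{}^\phi\theta^{\bar1}_\phi$) are $$\theta_1{}^1{}_\phi=\theta_1{}^1-F^{-1}dF-F^{-1}(B_{11}\theta^1+B_{12}\theta^{\bar1}+B_{13}\theta),$$ $$A^1{}_{\bar1}{}^\phi=A^1{}_{\bar1}-F^2\big(\phi_0+\phi\theta_1{}^1(T)-\phi\theta_{\bar1}{}^{\bar1}(T)+\phi^2A^{\bar1}{}_1-|\phi|^2A^1{}_{\bar1}\big),$$ where $B_{11}=F^2\big(-2F_1-\bar\phi F\theta_{\bar1}{}^{\bar1}(Z_{\bar1})+\bar\phi F\theta_1{}^1(Z_{\bar1})-F\bar\phi_{\bar1}-\bar\phi F\phi_1-2\bar\phi F_{\bar1}-|\phi|^2F\theta_1{}^1(Z_1)+|\phi|^2F\theta_{\bar1}{}^{\bar1}(Z_1)\big)$,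 $B_{12}=F^2\big(2|\phi|^2F_{\bar1}+\phi F\theta_1{}^1(Z_1)-\phi F\theta_{\bar1}{}^{\bar1}(Z_1)+F\phi_1+\phi F\bar\phi_{\bar1}+2\phi F_1+|\phi|^2F\theta_{\bar1}{}^{\bar1}(Z_{\bar1})-|\phi|^2F\theta_1{}^1(Z_{\bar1})\big)$, $B_{13}=F^3\big(-\bar\phi(\phi_0+\phi\theta_1{}^1(T)-\phi\theta_{\bar1}{}^{\bar1}(T))+\bar\phi A^1{}_{\bar1}-\phi A^{\bar1}{}_1\big)$.
   Context: $\theta$ contact form, $T$ Reeb field, $Z_1$ local frame of $T_{1,0}$, $Z_{\bar1}=\overline{Z_1}$, $\{\theta,\theta^1,\theta^{\bar1}\}$ dual to $\{T,Z_1,Z_{\bar1}\}$ with $d\theta=i\theta^1\wedge\theta^{\bar1}$. For a coframe $\{\theta,\vartheta^1,\vartheta^{\bar1}\}$ with $d\theta=i\vartheta^1\wedge\vartheta^{\bar1}$, the connection form $\vartheta_1{}^1$ and torsion form $\tau^1$ are uniquely determined by $d\vartheta^1=\vartheta^1\wedge\vartheta_1{}^1+\theta\wedge\tau^1$, $\tau^1\equiv0\bmod\vartheta^{\bar1}$, $\vartheta_1{}^1+\vartheta_{\bar1}{}^{\bar1}=0$. For the original coframe, $\tau^1=A^1{}_{\bar1}\theta^{\bar1}$; $A^{\bar1}{}_1=\overline{A^1{}_{\bar1}}$, $\theta_{\bar1}{}^{\bar1}=\overline{\theta_1{}^1}$. Notation: $\phi_1=Z_1\phi$, $\bar\phi_{\bar1}=Z_{\bar1}\bar\phi$,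 $F_1=Z_1F$, $F_{\bar1}=Z_{\bar1}F$, $\phi_0=T\phi$. *)

(* Abstract local model of a pseudohermitian 3-manifold
   described through a global frame {T, Z_1, Z_{\bar 1}} and its dual coframe
   {theta, theta^1, theta^{\bar 1}}. *)
From mathcomp Require Import all_boot all_order all_algebra.
Set Implicit Arguments. Unset Strict Implicit. Unset Printing Implicit Defensive.
Import Order.TTheory GRing.Theory Num.Theory.
Local Open Scope ring_scope.

Section PH.
Variables (C : numClosedFieldType) (M : Type).

Definition fn := M -> C.
Definition cstf (c : C) : fn := fun _ => c.
Definition conjf (f : fn) : fn := fun x => (f x)^*.

(* 1-forms, given by their values on the frame (T, Z_1, Z_{\bar1}),
   i.e. by their coefficients in the coframe (theta, theta^1, theta^{\bar1}) *)
Record form1 := Form1 { fT : fn; fZ : fn; fZb : fn }.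
(* 2-forms, given by their values on (Z_1,Z_{\bar1}), (T,Z_1), (T,Z_{\bar1}) *)
Record form2 := Form2 { gZZb : fn; gTZ : fn; gTZb : fn }.
(* vector fields written in the frame: vT T + vZ Z_1 + vZb Z_{\bar1} *)
Record vfield := VF { vT : fn; vZ : fn; vZb : fn }.

Definition eval1 (a : form1) (v : vfield) : fn :=
  fun x => vT v x * fT a x + vZ v x * fZ a x + vZb v x * fZb a x.

Definition add1 (a b : form1) : form1 :=
  Form1 (fun x => fT a x + fT b x) (fun x => fZ a x + fZ b x)
        (fun x => fZb a x + fZb b x).
Definition scale1 (g : fn) (a : form1) : form1 :=
  Form1 (fun x => g x * fT a x) (fun x => g x * fZ a x) (fun x => g x * fZb a x).
Definition zero1 : form1 := Form1 (cstf 0) (cstf 0) (cstf 0).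
(* complex conjugate of a 1-form: (conj a)(X) = conj (a (conj X)) *)
Definition conj1 (a : form1) : form1 :=
  Form1 (conjf (fT a)) (conjf (fZb a)) (conjf (fZ a)).

Definition add2 (a b : form2) : form2 :=
  Form2 (fun x => gZZb a x + gZZb b x) (fun x => gTZ a x + gTZ b x)
        (fun x => gTZb a x + gTZb b x).
Definition scale2 (g : fn) (a : form2) : form2 :=
  Form2 (fun x => g x * gZZb a x) (fun x => g x * gTZ a x)
        (fun x => g x * gTZb a x).
(* (a /\ b)(X,Y) = a(X) b(Y) - a(Y) b(X) *)
Definition wedge (a b : form1) : form2 :=
  Form2 (fun x => fZ a x * fZb b x - fZb a x * fZ b x)
        (fun x => fT a x * fZ b x - fZ a x * fT b x)
        (fun x => fT a x * fZb b x - fZb a x * fT b x).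

Definition theta : form1 := Form1 (cstf 1) (cstf 0) (cstf 0).
Definition theta1 : form1 := Form1 (cstf 0) (cstf 1) (cstf 0).
Definition theta1b : form1 := Form1 (cstf 0) (cstf 0) (cstf 1).

Record phframe := PHFrame {
  smooth : fn -> Prop;
  Tder : fn -> fn;
  Zder : fn -> fn;
  brTZ : vfield;
  brTZb : vfield;
  brZZb : vfield;
  omega : form1;
  Ator : fn
}.

Variable P : phframe.

Definition Zbder (f : fn) : fn := conjf (Zder P (conjf f)).

Definition d0 (f : fn) : form1 := Form1 (Tder P f) (Zder P f) (Zbder f).
Definition d1 (a : form1) : form2 :=
  Form2 (fun x => Zder P (fZb a) x - Zbder (fZ a) x - eval1 a (brZZb P) x)
        (fun x => Tder P (fZ a) x - Zder P (fT a) x - eval1 a (brTZ P) x)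
        (fun x => Tder P (fZb a) x - Zbder (fT a) x - eval1 a (brTZb P) x).

(* Defining equations of the (Tanaka-Webster) connection form om and torsion
   coefficient A (tau^1 = A vartheta^{\bar1}) of an admissible coframe
   (theta, vt, conj vt):  d theta = i vt /\ conj vt,
   d vt = vt /\ om + theta /\ tau,  tau = A conj vt,  om + conj om = 0. *)
Definition TW (vt om : form1) (A : fn) : Prop :=
  [/\ d1 theta = scale2 (cstf 'i) (wedge vt (conj1 vt)),
      d1 vt = add2 (wedge vt om) (wedge theta (scale1 A (conj1 vt))) &
      add1 om (conj1 om) = zero1].

Definition is_derivation (X : fn -> fn) : Prop :=
  [/\ forall f, smooth P f -> smooth P (X f),
      forall c, X (cstf c) = cstf 0,
      forall f g, smooth P f -> smooth P g ->
        X (fun x => f x + g x) = (fun x => X f x + X g x) &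
      forall f g, smooth P f -> smooth P g ->
        X (fun x => f x * g x) = (fun x => X f x * g x + f x * X g x)].

Definition smooth_vf (v : vfield) : Prop :=
  [/\ smooth P (vT v), smooth P (vZ v) & smooth P (vZb v)].

Record ph_axioms : Prop := {
  sm_cst : forall c, smooth P (cstf c);
  sm_add : forall f g, smooth P f -> smooth P g -> smooth P (fun x => f x + g x);
  sm_mul : forall f g, smooth P f -> smooth P g -> smooth P (fun x => f x * g x);
  sm_opp : forall f, smooth P f -> smooth P (fun x => - f x);
  sm_conj : forall f, smooth P f -> smooth P (conjf f);
  sm_invsqrt : forall f, smooth P f -> (forall x, 0 < f x) ->
      smooth P (fun x => (sqrtC (f x))^-1);
  T_der : is_derivation (Tder P);
  Z_der : is_derivation (Zder P);
  T_real : forall f, smooth P f -> Tder P (conjf f) = conjf (Tder P f);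
  (* (T, Z_1, Z_{\bar1}) is a frame: pointwise linearly independent *)
  frame_indep : forall a b c : fn,
      (forall f, smooth P f -> forall x,
          a x * Tder P f x + b x * Zder P f x + c x * Zbder f x = 0) ->
      forall x, [/\ a x = 0, b x = 0 & c x = 0];
  br_sm : [/\ smooth_vf (brTZ P), smooth_vf (brTZb P) & smooth_vf (brZZb P)];
  br_TZ : forall f, smooth P f ->
      (fun x => Tder P (Zder P f) x - Zder P (Tder P f) x) = eval1 (d0 f) (brTZ P);
  br_TZb : forall f, smooth P f ->
      (fun x => Tder P (Zbder f) x - Zbder (Tder P f) x) = eval1 (d0 f) (brTZb P);
  br_ZZb : forall f, smooth P f ->
      (fun x => Zder P (Zbder f) x - Zbder (Zder P f) x) = eval1 (d0 f) (brZZb P);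
  om_sm : [/\ smooth P (fT (omega P)), smooth P (fZ (omega P)) &
              smooth P (fZb (omega P))];
  A_sm : smooth P (Ator P);
  structure : TW theta1 (omega P) (Ator P)
}.

Variable phi : fn.

Definition Ff : fn := fun x => (sqrtC (1 - `|phi x| ^+ 2))^-1.

Definition theta1_phi : form1 :=
  Form1 (cstf 0) Ff (fun x => - (Ff x * phi x)).

Definition om11 := omega P.
Definition om1b1b := conj1 (omega P).
Definition Abar : fn := conjf (Ator P).
Definition phib : fn := conjf phi.

Definition B11 : fn := fun x =>
  Ff x ^+ 2 * (- 2%:R * Zder P Ff x
     - phib x * Ff x * fZb om1b1b x + phib x * Ff x * fZb om11 x
     - Ff x * Zbder phib x - phib x * Ff x * Zder P phi x
     - 2%:R * phib x * Zbder Ff x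
     - `|phi x| ^+ 2 * Ff x * fZ om11 x + `|phi x| ^+ 2 * Ff x * fZ om1b1b x).

Definition B12 : fn := fun x =>
  Ff x ^+ 2 * (2%:R * `|phi x| ^+ 2 * Zbder Ff x
     + phi x * Ff x * fZ om11 x - phi x * Ff x * fZ om1b1b x
     + Ff x * Zder P phi x + phi x * Ff x * Zbder phib x
     + 2%:R * phi x * Zder P Ff x
     + `|phi x| ^+ 2 * Ff x * fZb om1b1b x - `|phi x| ^+ 2 * Ff x * fZb om11 x).

Definition B13 : fn := fun x =>
  Ff x ^+ 3 * (- phib x * (Tder P phi x + phi x * fT om11 x - phi x * fT om1b1b x)
     + phib x * Ator P x - phi x * Abar x).

Definition omega_phi : form1 :=
  Form1 (fun x => fT om11 x - (Ff x)^-1 * Tder P Ff x - (Ff x)^-1 * B13 x)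
        (fun x => fZ om11 x - (Ff x)^-1 * Zder P Ff x - (Ff x)^-1 * B11 x)
        (fun x => fZb om11 x - (Ff x)^-1 * Zbder Ff x - (Ff x)^-1 * B12 x).

Definition A_phi : fn := fun x =>
  Ator P x - Ff x ^+ 2 * (Tder P phi x + phi x * fT om11 x - phi x * fT om1b1b x
     + phi x ^+ 2 * Abar x - `|phi x| ^+ 2 * Ator P x).

End PH.

(* The coframe [theta1_phi] is admissible because [F ^+ 2 * (1 - |phi| ^+ 2) = 1].
   Two solutions of its structure equations differ, at each point, by a
   solution of a small homogeneous system (only R-linear, because of the
   reality condition on the connection form) which has only the trivial
   solution when [|phi| < 1]; hence the connection and torsion are unique.
   Existence is a direct verification: the structure equations of the original
   coframe express the brackets of the frame through [theta_1^1] and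
   [A^1_1bar], the derivatives of [F] follow by differentiating
   [F ^+ 2 * (1 - phi * phi^* ) = 1], and what remains are rational identities
   that hold modulo that same relation. *)

From mathcomp Require Import all_boot all_order all_algebra ring.
From Stdlib Require Import FunctionalExtensionality.
Set Implicit Arguments. Unset Strict Implicit. Unset Printing Implicit Defensive.
Import Order.TTheory GRing.Theory Num.Theory.
Local Open Scope ring_scope.

Lemma eq_of_subr_eq (R : zmodType) (a b c d : R) : a = b -> c - d = b - a -> c = d.
Proof. by move=> -> /eqP; rewrite subrr subr_eq0 => /eqP. Qed.

Lemma conjC_combination (R : numClosedFieldType) (X Y a b c t z w : R) :
  X^* - Y^* = a * t^* + b * z^* + c * w^* -> X - Y = a^* * t + b^* * z + c^* * w.
Proof. by move/(congr1 (fun u => u^*)); rewrite rmorphB !rmorphD !rmorphM /= !conjCK. Qed.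

Lemma norm_lt1_one_sub_neq0 (R : numClosedFieldType) (p : R) :
  `|p| < 1 -> 1 - p * p^* != 0.
Proof. by move=> p_lt1; rewrite -normCK subr_eq0 eq_sym lt_eqF // exprn_ilt1. Qed.

Lemma torsion_system_unique (R : numClosedFieldType) (p u v : R) :
  `|p| < 1 -> u + p^* * v = 0 -> p * u + v = 0 -> u = 0 /\ v = 0.
Proof.
move=> p_lt1 eu ev.
have v_eq : v = - (p * u) by rewrite -[RHS]add0r -ev; ring.
have : (1 - p * p^*) * u = 0 by rewrite -[RHS]eu v_eq; ring.
move/eqP; rewrite mulf_eq0 (negPf (norm_lt1_one_sub_neq0 p_lt1)) => /eqP u0.
by rewrite v_eq u0 mulr0 oppr0.
Qed.

Lemma conj_system_unique (R : numClosedFieldType) (p u v : R) :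
  `|p| < 1 -> v + p * u = 0 -> u + v^* = 0 -> u = 0 /\ v = 0.
Proof.
move=> p_lt1 ev eu.
have v_eq : v = - (p * u) by rewrite -[RHS]add0r -ev; ring.
have u_eq : u = p^* * u^*.
  by rewrite -[LHS]subr0 -eu v_eq rmorphN rmorphM /=; ring.
have uc : u^* = p * u by rewrite {1}u_eq rmorphM /= !conjCK.
have : (1 - p * p^*) * (u * u^*) = 0.
  by transitivity (u * u^* - (p^* * u^*) * (p * u)); [ring | rewrite -uc -u_eq subrr].
move/eqP; rewrite mulf_eq0 (negPf (norm_lt1_one_sub_neq0 p_lt1)) -normCK.
rewrite sqrf_eq0 normr_eq0 => /eqP u0.
by rewrite v_eq u0 mulr0 oppr0.
Qed.

Lemma deriv_of_sqr_inv (R : numFieldType) (F g dF dg : R) :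
  F ^+ 2 * g = 1 -> (dF * F + F * dF) * g + F * F * dg = 0 ->
  dF = - F ^+ 3 * dg / 2%:R.
Proof.
move=> Fg dFg; rewrite -[dF]mulr1 -{1}Fg.
have -> : dF * (F ^+ 2 * g) = F / 2%:R * ((dF * F + F * dF) * g) by field.
have -> : (dF * F + F * dF) * g = - (F * F * dg) by apply/eqP; rewrite -addr_eq0 dFg.
by field.
Qed.

Section Derivations.
Variables (C : numClosedFieldType) (M : Type) (P : phframe C M).
Hypothesis HP : ph_axioms P.

Lemma conjfK (f : fn C M) : conjf (conjf f) = f.
Proof. by apply: functional_extensionality => x; rewrite /conjf conjCK. Qed.

Lemma conjf_Zder (f : fn C M) : conjf (Zder P f) = Zbder P (conjf f).
Proof. by rewrite /Zbder conjfK. Qed.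

Lemma conjf_Zbder (f : fn C M) : conjf (Zbder P f) = Zder P (conjf f).
Proof. by rewrite /Zbder conjfK. Qed.

Lemma Zbder_derivation : is_derivation P (Zbder P).
Proof.
have [Zsm Zc Za Zm] := Z_der HP.
split=> [f sf | c | f g sf sg | f g sf sg]; rewrite /Zbder.
- exact/sm_conj/Zsm/sm_conj.
- rewrite (_ : conjf (cstf c) = cstf c^*) // Zc.
  by apply: functional_extensionality => x; rewrite /conjf /cstf conjC0.
- rewrite (_ : conjf (fun x => f x + g x) = fun x => conjf f x + conjf g x); last first.
    by apply: functional_extensionality => x; rewrite /conjf rmorphD.
  rewrite Za; try exact: (sm_conj HP).
  by apply: functional_extensionality => x; rewrite /conjf rmorphD.
- rewrite (_ : conjf (fun x => f x * g x) = fun x => conjf f x * conjf g x); last first.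
    by apply: functional_extensionality => x; rewrite /conjf rmorphM.
  rewrite Zm; try exact: (sm_conj HP).
  by apply: functional_extensionality => x; rewrite /conjf rmorphD !rmorphM /= !conjCK.
Qed.

Lemma derivation_oppM (X : fn C M -> fn C M) : is_derivation P X ->
  forall f g, smooth P f -> smooth P g ->
  X (fun x => - (f x * g x)) = (fun x => - (X f x * g x + f x * X g x)).
Proof.
move=> [_ Xc Xa Xm] f g sf sg.
rewrite [fun x => _](_ : _ = fun x => cstf (-1) x * (fun y => f y * g y) x); last first.
  by apply: functional_extensionality => x; rewrite /cstf mulN1r.
rewrite Xm ?Xc ?Xm //; [|exact: sm_cst|exact: sm_mul].
by apply: functional_extensionality => x; rewrite /cstf; ring.
Qed.

End Derivations.

Section Frame.
Variables (C : numClosedFieldType) (M : Type) (P : phframe C M).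
Hypothesis HP : ph_axioms P.

Lemma omega_imaginary x :
  [/\ (fT (omega P) x)^* = - fT (omega P) x, (fZb (omega P) x)^* = - fZ (omega P) x &
      (fZ (omega P) x)^* = - fZb (omega P) x].
Proof.
have [_ _ /(congr1 (fun f => (fT f x, fZ f x, fZb f x)))[]] := structure HP.
rewrite /conjf /cstf => e1 e2 e3.
by split; apply/eqP; rewrite -addr_eq0 addrC ?e1 ?e2 ?e3.
Qed.

Lemma brackets_Z x :
  [/\ vZ (brZZb P) x = - fZb (omega P) x, vZ (brTZ P) x = fT (omega P) x &
      vZ (brTZb P) x = - Ator P x].
Proof.
have [_ S2 _] := structure HP.
have [_ Zc _ _] := Z_der HP; have [_ Tc _ _] := T_der HP.
have [_ Zbc _ _] := Zbder_derivation HP.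
have /(congr1 (fun f => (gZZb f x, gTZ f x, gTZb f x)))[] := S2.
rewrite /theta1 /= !Zc !Zbc !Tc /eval1 /cstf /conj1 /conjf /= !rmorph0 !rmorph1.
by move=> e1 e2 e3; split; [apply: (eq_of_subr_eq e1) | apply: (eq_of_subr_eq e2)
  | apply: (eq_of_subr_eq e3)]; ring.
Qed.

Lemma brZZb_Zb x : vZb (brZZb P) x = - (vZ (brZZb P) x)^*.
Proof.
set v := brZZb P.
suff key g : smooth P g -> forall y,
  (vT v y + (vT v y)^*) * Tder P g y + (vZ v y + (vZb v y)^*) * Zder P g y
  + (vZb v y + (vZ v y)^*) * Zbder P g y = 0.
  have [_ _ /eqP] := frame_indep HP (a := fun x => vT v x + (vT v x)^*)
    (b := fun x => vZ v x + (vZb v x)^*) (c := fun x => vZb v x + (vZ v x)^*) key x.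
  by rewrite addr_eq0 => /eqP.
move=> sg y.
have h1 := congr1 (fun h => h y) (br_ZZb HP sg).
have h2 := congr1 (fun h => h y) (br_ZZb HP (sm_conj HP sg)).
move: h1 h2; rewrite /eval1 /d0 /= -(conjf_Zder P g) -(conjf_Zbder P g).
rewrite -(conjf_Zbder P (Zder P g)) -(conjf_Zder P (Zbder P g)) (T_real HP sg).
move=> h1 /conjC_combination h2.
have : 0 = (Zder P (Zbder P g) y - Zbder P (Zder P g) y) +
           (Zbder P (Zder P g) y - Zder P (Zbder P g) y) by ring.
by rewrite h1 h2 => ->; ring.
Qed.

Lemma brTZ_conj x : vZb (brTZ P) x = (vZ (brTZb P) x)^* /\
                    vZ (brTZ P) x = (vZb (brTZb P) x)^*.
Proof.
set u := brTZ P; set w := brTZb P.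
have [Zs _ _ _] := Z_der HP.
suff key g : smooth P g -> forall y,
  (vT u y - (vT w y)^*) * Tder P g y + (vZ u y - (vZb w y)^*) * Zder P g y
  + (vZb u y - (vZ w y)^*) * Zbder P g y = 0.
  have [_ /eqP hb /eqP hc] := frame_indep HP (a := fun x => vT u x - (vT w x)^*)
    (b := fun x => vZ u x - (vZb w x)^*) (c := fun x => vZb u x - (vZ w x)^*) key x.
  by move: hb hc; rewrite !subr_eq0 => /eqP -> /eqP ->.
move=> sg y.
have h1 := congr1 (fun h => h y) (br_TZ HP sg).
have h2 := congr1 (fun h => h y) (br_TZb HP (sm_conj HP sg)).
move: h1 h2; rewrite /eval1 /d0 /= -(conjf_Zder P g) -(conjf_Zbder P g) (T_real HP sg).
rewrite -(conjf_Zder P (Tder P g)) (T_real HP (Zs _ sg)) => h1 /conjC_combination h2.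
have : 0 = (Tder P (Zder P g) y - Zder P (Tder P g) y) -
           (Tder P (Zder P g) y - Zder P (Tder P g) y) by ring.
by rewrite {1}h1 h2 => ->; ring.
Qed.

Lemma bracket_coefficients x :
  [/\ vZ (brZZb P) x = - fZb (omega P) x, vZb (brZZb P) x = - fZ (omega P) x &
      vZ (brTZ P) x = fT (omega P) x] /\ [/\ vZb (brTZ P) x = - (Ator P x)^*,
      vZ (brTZb P) x = - Ator P x & vZb (brTZb P) x = - fT (omega P) x].
Proof.
have [h1 h2 h3] := brackets_Z x.
have [r1 r2 r3] := omega_imaginary x.
have [c1 c2] := brTZ_conj x.
do 2 split => //.
- by rewrite brZZb_Zb h1 rmorphN /= r2 opprK.
- by rewrite c1 h3 rmorphN.
- by rewrite -[vZb _ _]conjCK -c2 h2 r1.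
Qed.

End Frame.

(* Closes a rational identity in [p], [p^*] and [F] that holds only modulo
   [F ^+ 2 * (1 - p * p^* ) = 1]: [conjp] eliminates [p^*] when [p != 0],
   and [Fp0] gives [F = 1] when [p = 0]. *)
Ltac field_mod_sqr p F Fp0 conjp Fn0 :=
  let p0 := fresh "p0" in
  destruct (orP (orbN (p == 0))) as [p0 | p0];
  [ rewrite (Fp0 (eqP p0)) (eqP p0) conjC0; by field
  | rewrite (conjp p0); field; by rewrite ?p0 ?Fn0 ].

Section Deformation.
Variables (C : numClosedFieldType) (M : Type) (P : phframe C M) (phi : fn C M).
Hypotheses (HP : ph_axioms P) (phi_smooth : smooth P phi) (phi_lt1 : forall x, `|phi x| < 1).

Lemma one_sub_sqr_gt0 x : 0 < 1 - `|phi x| ^+ 2.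
Proof. by rewrite subr_gt0 exprn_ilt1. Qed.

Lemma Ff_gt0 x : 0 < Ff phi x.
Proof. by rewrite /Ff invr_gt0 sqrtC_gt0 one_sub_sqr_gt0. Qed.

Lemma Ff_neq0 x : Ff phi x != 0.
Proof. exact/lt0r_neq0/Ff_gt0. Qed.

Lemma conj_Ff x : (Ff phi x)^* = Ff phi x.
Proof. exact/geC0_conj/ltW/Ff_gt0. Qed.

Lemma Ff_sqrM x : Ff phi x ^+ 2 * (1 - phi x * (phi x)^*) = 1.
Proof.
rewrite -normCK /Ff exprVn sqrtCK mulVf //.
exact/lt0r_neq0/one_sub_sqr_gt0.
Qed.

Let g : fn C M := fun x => cstf 1 x + (fun y => - (phi y * conjf phi y)) x.

Let g_smooth : smooth P g.
Proof.
apply: (sm_add HP); first exact: sm_cst.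
exact/(sm_opp HP)/(sm_mul HP phi_smooth)/(sm_conj HP).
Qed.

Lemma smooth_Ff : smooth P (Ff phi).
Proof.
rewrite /Ff (_ : (fun x => _) = fun x => (sqrtC (g x))^-1).
  by apply: (sm_invsqrt HP g_smooth) => x; rewrite /g /cstf -normCK one_sub_sqr_gt0.
by apply: functional_extensionality => x; rewrite /g /cstf -normCK.
Qed.

Lemma derivation_Ff X : is_derivation P X -> forall x,
  X (Ff phi) x = Ff phi x ^+ 3 * ((phi x)^* * X phi x + phi x * X (conjf phi) x) / 2%:R.
Proof.
move=> dX x; have [_ Xc Xa Xm] := dX.
have sF := smooth_Ff; have sb := sm_conj HP phi_smooth.
have FFg : (fun y => (fun z => Ff phi z * Ff phi z) y * g y) = cstf 1.
  by apply: functional_extensionality => y; rewrite /g /cstf /conjf /= -expr2 Ff_sqrM.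
have sFF : smooth P (fun y => Ff phi y * Ff phi y) by exact: sm_mul.
have spb : smooth P (fun y => phi y * conjf phi y) by exact: sm_mul.
have := congr1 (fun h => X h x) FFg.
rewrite Xc Xm // Xm // /g Xa ?Xc //; last first.
- exact: (sm_opp HP).
- exact: sm_cst.
rewrite (derivation_oppM HP dX phi_smooth sb) /cstf /conjf /= add0r.
move=> /(deriv_of_sqr_inv (Ff_sqrM x)) ->.
by field.
Qed.

Lemma Ff_eq1 x : phi x = 0 -> Ff phi x = 1.
Proof.
move=> p0; have := Ff_sqrM x; rewrite p0 mul0r subr0 mulr1 => /eqP.
rewrite sqrf_eq1 => /orP[/eqP // | /eqP F1].
by have := Ff_gt0 x; rewrite F1 oppr_gt0 ltr10.
Qed.

Lemma conj_phi_Ff x : phi x != 0 ->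
  (phi x)^* = (Ff phi x ^+ 2 - 1) / (Ff phi x ^+ 2 * phi x).
Proof.
move=> pn0; rewrite -{1}(Ff_sqrM x); field.
by rewrite pn0 Ff_neq0.
Qed.

Ltac field_mod_Ff x :=
  field_mod_sqr (phi x) (Ff phi x) (@Ff_eq1 x) (@conj_phi_Ff x) (Ff_neq0 x).

Lemma dtheta_phi :
  d1 P (theta C M) = scale2 (cstf 'i) (wedge (theta1_phi phi) (conj1 (theta1_phi phi))).
Proof.
have [-> _ _] := structure HP; congr scale2.
rewrite /wedge; congr Form2; apply: functional_extensionality => x;
  rewrite /theta1 /theta1_phi /conj1 /conjf /cstf /= ?rmorphN ?rmorphM ?rmorph0 ?rmorph1 /=
    ?conj_Ff; first [ring | field_mod_Ff x].
Qed.

Lemma conj_derivatives_phi x :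
  [/\ Zder P (conjf phi) x = (Zbder P phi x)^*, Zbder P (conjf phi) x = (Zder P phi x)^*
    & Tder P (conjf phi) x = (Tder P phi x)^*].
Proof. by rewrite -conjf_Zbder -conjf_Zder (T_real HP phi_smooth). Qed.

Lemma dtheta1_phi :
  d1 P (theta1_phi phi) = add2 (wedge (theta1_phi phi) (omega_phi P phi))
    (wedge (theta C M) (scale1 (A_phi P phi) (conj1 (theta1_phi phi)))).
Proof.
have dT := T_der HP; have dZ := Z_der HP; have dZb := Zbder_derivation HP.
have [_ Tc _ _] := dT; have [_ Zc _ _] := dZ; have [_ Zbc _ _] := dZb.
rewrite /d1 /add2 /wedge /theta1_phi /=.
rewrite (derivation_oppM HP dZ smooth_Ff phi_smooth).
rewrite (derivation_oppM HP dT smooth_Ff phi_smooth) Zbc Zc.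
congr Form2; apply: functional_extensionality => x;
  have [[b1 b2 b3] [b4 b5 b6]] := bracket_coefficients HP x;
  have [r1 r2 r3] := omega_imaginary HP x;
  have [cZ cZb cT] := conj_derivatives_phi x;
  rewrite /eval1 /= ?b1 ?b2 ?b3 ?b4 ?b5 ?b6 /B11 /B12 /B13 /A_phi /om11 /om1b1b /Abar
    /phib /conj1 /conjf /cstf /= ?(derivation_Ff dT) ?(derivation_Ff dZ)
    ?(derivation_Ff dZb) ?cZ ?cZb ?cT ?rmorphN ?rmorphM /= ?r1 ?r2 ?r3 ?conj_Ff ?normCK;
  field_mod_Ff x.
Qed.

Lemma omega_phi_imaginary : add1 (omega_phi P phi) (conj1 (omega_phi P phi)) = zero1 C M.
Proof.
have dT := T_der HP; have dZ := Z_der HP; have dZb := Zbder_derivation HP.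
rewrite /add1 /zero1; congr Form1; apply: functional_extensionality => x;
  have [r1 r2 r3] := omega_imaginary HP x;
  have [cZ cZb cT] := conj_derivatives_phi x;
  rewrite /omega_phi /B11 /B12 /B13 /om11 /om1b1b /Abar /phib /conj1 /conjf /cstf /=
    ?(derivation_Ff dT, derivation_Ff dZ, derivation_Ff dZb, cZ, cZb, cT) ?normCK;
  move: (Ff phi x) (@Ff_eq1 x) (@conj_phi_Ff x) (Ff_neq0 x) (conj_Ff x) => F F1 cp Fn0 cF;
  rewrite ?(rmorphD, rmorphB, rmorphN, rmorphM, fmorphV, rmorphXn, rmorph_nat, rmorph1) /=
    ?conjCK ?r1 ?r2 ?r3 ?cF;
  field_mod_sqr (phi x) F F1 cp Fn0.
Qed.

Lemma TW_theta1_phi : TW P (theta1_phi phi) (omega_phi P phi) (A_phi P phi).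
Proof. by split; [exact: dtheta_phi | exact: dtheta1_phi | exact: omega_phi_imaginary]. Qed.

Lemma TW_theta1_phi_unique om A om' A' :
  TW P (theta1_phi phi) om A -> TW P (theta1_phi phi) om' A' -> om = om' /\ A = A'.
Proof.
case: om => oT oZ oZb; case: om' => oT' oZ' oZb' [_ d r] [_ d' r'].
suff pw x : [/\ oT x = oT' x, oZ x = oZ' x, oZb x = oZb' x & A x = A' x].
  split; [congr Form1 |]; apply: functional_extensionality => x; by case: (pw x).
have cancelF y : Ff phi x * y = 0 -> y = 0.
  by move/eqP; rewrite mulf_eq0 (negPf (Ff_neq0 x)) => /eqP.
have /(congr1 (fun f => (gZZb f x, gTZ f x, gTZb f x)))[] := etrans (esym d) d'.
have /(congr1 (fun f => fZ f x)) := r'; have /(congr1 (fun f => fZ f x)) := r.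
rewrite /wedge /add2 /theta1_phi /scale1 /conj1 /add1 /zero1 /conjf /cstf /=.
rewrite ?rmorphN ?rmorphM /= ?conj_Ff ?rmorph0 => r0 r0' eZZb eTZ eTZb.
have hT : oT x - oT' x + (phi x)^* * (A x - A' x) = 0.
  by apply: cancelF; apply: (eq_of_subr_eq eTZ); ring.
have hTb : phi x * (oT x - oT' x) + (A x - A' x) = 0.
  by apply: cancelF; apply: (eq_of_subr_eq (esym eTZb)); ring.
have hZ : oZb x - oZb' x + phi x * (oZ x - oZ' x) = 0.
  by apply: cancelF; apply: (eq_of_subr_eq (esym eZZb)); ring.
have hr : oZ x - oZ' x + (oZb x - oZb' x)^* = 0.
  transitivity ((oZ x + (oZb x)^*) - (oZ' x + (oZb' x)^*)); first by rewrite rmorphB; ring.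
  by rewrite r0 r0' subrr.
have [/subr0_eq eT /subr0_eq eA] := torsion_system_unique (phi_lt1 x) hT hTb.
by have [/subr0_eq eZ /subr0_eq eZb] := conj_system_unique (phi_lt1 x) hZ hr.
Qed.


End Deformation.

Theorem proposition4p1 (C : numClosedFieldType) (M : Type)
  (P : phframe C M) (HP : ph_axioms P) (phi : M -> C) :
  smooth P phi -> (forall x, `|phi x| < 1) ->
  TW P (theta1_phi phi) (omega_phi P phi) (A_phi P phi) /\
  (forall (om : form1 C M) (A : M -> C),
      TW P (theta1_phi phi) om A ->
      om = omega_phi P phi /\ A = A_phi P phi).
Proof.
move=> phi_smooth phi_lt1.
have TW_phi := TW_theta1_phi HP phi_smooth phi_lt1.
split=> // om A TW_om.
exact: (TW_theta1_phi_unique phi_lt1 TW_om TW_phi).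
Qed.
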